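(* Every finite solvable group has the $E1$-property.
   Context: For a finite group $G$, a finite-dimensional $\mathbb{R}G$-module $V$ with representation $\rho\colon G\to\mathrm{GL}(V)$, and $n\in\mathrm{GL}(V)$ of finite order normalizing $\rho(G)$, the triple $(G,V,n)$ has the $E1$-property if there is $g\in G$ such that $\rho(g)n$ has eigenvalue $1$. The pair $(G,V)$ has the $E1$-property if $(G,V,n')$ has the $E1$-property for every $n'\in\mathrm{GL}(V)$ of finite order normalizing $\rho(G)$. The group $G$ has the $E1$-property if $(G,V')$ has the $E1$-property for every irreducible, non-trivial $\mathbb{R}G$-module $V'$ of odd dimension. *)

From HB Require Import structures.
From mathcomp Require Import all_boot all_order all_algebra all_fingroup all_solvable all_character.
From mathcomp Require Import Rstruct.
From Stdlib Require Rdefinitions.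
Notation R := Rdefinitions.R.
Set Implicit Arguments. Unset Strict Implicit. Unset Printing Implicit Defensive.
Import GRing.Theory.
Local Open Scope ring_scope.

(* Real representations of a finite group G on V = R^d (row-vector convention of
   mxrepresentation: rG g acts on the right).  R is Stdlib's real numbers. *)

Definition normalizing_finite_order (gT : finGroupType) (G : {group gT}) (d : nat)
    (rG : mx_representation R G d) (N : 'M[R]_d) : Prop :=
  [/\ N \in unitmx,
      exists2 k : nat, (0 < k)%N & N ^+ k = 1%:M,
      forall g, g \in G -> exists2 h, h \in G & N *m rG g *m invmx N = rG h
    & forall h, h \in G -> exists2 g, g \in G & N *m rG g *m invmx N = rG h].

Definition E1_triple (gT : finGroupType) (G : {group gT}) (d : nat)
    (rG : mx_representation R G d) (N : 'M[R]_d) : Prop :=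
  exists2 g, g \in G & eigenvalue (rG g *m N) 1.

Definition E1_pair (gT : finGroupType) (G : {group gT}) (d : nat)
    (rG : mx_representation R G d) : Prop :=
  forall N : 'M[R]_d, normalizing_finite_order rG N -> E1_triple rG N.

Definition nontrivial_repr (gT : finGroupType) (G : {group gT}) (d : nat)
    (rG : mx_representation R G d) : Prop :=
  exists2 g, g \in G & rG g != 1%:M.

Definition E1_group (gT : finGroupType) (G : {group gT}) : Prop :=
  forall (d : nat) (rG : mx_representation R G d),
    mx_irreducible rG -> nontrivial_repr rG -> odd d -> E1_pair rG.

From HB Require Import structures.
From mathcomp Require Import all_boot all_order all_algebra.
From mathcomp Require Import all_fingroup all_solvable all_character.
From mathcomp Require Import Rstruct polyrcf.

(* Let n normalize rho(G).  Take the last term D = G^(k) of the derived series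
   that acts non-trivially; rho(D) is abelian and normalized by rho(G) and by n.
   Choose a prime p and the elements A of D acting with exponent p, one of
   them non-trivially.
   If p is odd, the common fixed space of rho(A) has the parity of dim V, so
   it is a non-zero submodule, hence all of V: impossible.
   If p = 2, V is the direct sum of the weight spaces of the commuting
   involutions rho(A), permuted by rho(G) and by n.  Some weight space W is
   odd-dimensional; by irreducibility its weight is non-trivial and rho(G) is
   transitive on the non-zero weight spaces, so x = n rho(h) stabilizes W for
   some h.  The finite-order x has a real eigenvalue 1 or -1 on the
   odd-dimensional W, and the sign -1 is corrected by an element of A acting
   as -1 on W. *)

Set Implicit Arguments. Unset Strict Implicit. Unset Printing Implicit Defensive.
Import GRing.Theory Num.Theory.
Local Open Scope ring_scope.

Section RealLinearAlgebra.
Variable F : rcfType.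

Lemma stable_odd_rank_eigenvector d (U b : 'M[F]_d) :
  (U *m b <= U)%MS -> odd (\rank U) ->
  exists2 v : 'rV[F]_d, (v != 0) && (v <= U)%MS & exists l : F, v *m b = l *: v.
Proof.
move=> sUb oddU; set B := row_base U.
have sBb : (B *m b <= B)%MS.
  by rewrite eq_row_base (submx_trans _ sUb) // submxMr // eq_row_base.
set C := B *m b *m pinvmx B.
have CB : C *m B = B *m b by exact: mulmxKpV.
(* [C] represents [b] on [U]; its characteristic polynomial has odd degree. *)
have [l] : {l | root (char_poly C) l}.
  by apply: odd_poly_root; rewrite size_char_poly /= negbK.
rewrite -eigenvalue_root_char => /eigenvalueP [w wC wn0].
exists (w *m B); last by exists l; rewrite -mulmxA -CB mulmxA wC scalemxAl.
rewrite (submx_trans (submxMl _ _)) ?eq_row_base // andbT.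
apply: contra wn0 => /eqP/(congr1 (mulmx^~ (pinvmx B))).
by rewrite mulmxKp ?row_base_free // mul0mx => ->.
Qed.

Lemma eigenvectorX m d (b : 'M[F]_d) (v : 'M_(m, d)) l k :
  v *m b = l *: v -> v *m b ^+ k = l ^+ k *: v.
Proof.
move=> vb; elim: k => [|k IHk]; first by rewrite !expr0 mulmx1 scale1r.
by rewrite exprSr -mulmxE mulmxA IHk -scalemxAl vb scalerA -exprSr.
Qed.

Lemma eigenvalue_finite_order d (b : 'M[F]_d) (v : 'rV_d) l k :
  (0 < k)%N -> b ^+ k = 1 -> v != 0 -> v *m b = l *: v -> l = 1 \/ l = -1.
Proof.
move=> k_gt0 bk vn0 /(eigenvectorX k); rewrite bk mulmx1 => /eqP.
rewrite -subr_eq0 -{1}(scale1r v) -scalerBl scaler_eq0 (negbTE vn0) orbF.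
rewrite subr_eq0 eq_sym => /eqP lk.
have : `|l| == 1 by rewrite -(pexpr_eq1 k_gt0) // -normrX lk normr1.
by rewrite -sqr_norm_eq1 sqrf_eq1 => /orP [] /eqP ->; [left | right].
Qed.

Lemma odd_order_eigenvalue d (b : 'M[F]_d) (v : 'rV_d) l p :
  odd p -> b ^+ p = 1 -> v != 0 -> v *m b = l *: v -> l = 1.
Proof.
move=> p_odd bp vn0 vb; have p_gt0 : (0 < p)%N by case: p p_odd {bp}.
have [//|l_N1] := eigenvalue_finite_order p_gt0 bp vn0 vb.
move: vb => /(eigenvectorX p); rewrite bp mulmx1 l_N1 -signr_odd p_odd scaleN1r.
move/eqP; rewrite -subr_eq0 opprK -mulr2n -scaler_nat scaler_eq0 pnatr_eq0 /=.
by rewrite (negbTE vn0).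
Qed.

Section OddOrder.
Variables (d p : nat) (b : 'M[F]_d).
Hypotheses (p_odd : odd p) (bp : b ^+ p = 1).

Lemma even_rank_stable_fixed_free (U : 'M[F]_d) :
  (U *m b <= U)%MS -> (U :&: kermx (b - 1%:M))%MS = 0 -> ~~ odd (\rank U).
Proof.
move=> sUb U1; apply/negP => /(stable_odd_rank_eigenvector sUb).
case=> v /andP[vn0 vU] [l vb].
have vb1 : v *m b = v by rewrite vb (odd_order_eigenvalue p_odd bp vn0 vb) scale1r.
have : (v <= U :&: kermx (b - 1%:M))%MS.
  by rewrite sub_capmx vU sub_kermx mulmxBr mulmx1 vb1 subrr eqxx.
by rewrite U1 submx0 (negbTE vn0).
Qed.

(* The averaging projector onto the fixed space of [b]. *)
Let E := (p%:R)^-1 *: \sum_(j < p) b ^+ j.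

Let p_gt0 : (0 < p)%N. Proof. by case: p p_odd. Qed.

Let sum_shift : \sum_(j < p) b ^+ j.+1 = \sum_(j < p) b ^+ j.
Proof.
case: p p_gt0 bp => // q _ bq.
by rewrite big_ord_recr big_ord_recl /= bq expr0 addrC.
Qed.

Let Eb : E *m b = E.
Proof.
rewrite /E -scalemxAl mulmx_suml -sum_shift; congr (_ *: _).
by apply: eq_bigr => j _; rewrite mulmxE -exprSr.
Qed.

Let bE : b *m E = E.
Proof.
rewrite /E -scalemxAr mulmx_sumr -sum_shift; congr (_ *: _).
by apply: eq_bigr => j _; rewrite mulmxE -exprS.
Qed.

Let fixedE m (v : 'M_(m, d)) : v *m b = v -> v *m E = v.
Proof.
move=> vb; rewrite /E -scalemxAr mulmx_sumr (eq_bigr (fun _ => v)).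
  by rewrite sumr_const card_ord -scaler_nat scalerA mulVf ?pnatr_eq0 -?lt0n ?scale1r.
by move=> j _; rewrite (eigenvectorX j (l := 1)) ?expr1n scale1r.
Qed.

Let sub_kermx_fixed m (X : 'M_(m, d)) :
  (X <= kermx (b - 1%:M))%MS = (X *m b == X).
Proof. by rewrite sub_kermx mulmxBr mulmx1 subr_eq0. Qed.

Let fixed_sub_killed m n (X : 'M_(m, d)) (L : 'M_(n, d)) :
  (X <= L)%MS -> L *m E = 0 -> (X <= kermx (b - 1%:M))%MS -> X = 0.
Proof.
move=> /submxP[D ->] LE; rewrite sub_kermx_fixed => /eqP/fixedE.
by rewrite -mulmxA LE mulmx0.
Qed.

(* [U] is the direct sum of its fixed part and of [U (1 - E)], which is
   [b]-stable without fixed vectors, hence of even rank. *)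
Lemma odd_rank_capmx_fixed (U : 'M[F]_d) : (U *m b <= U)%MS ->
  odd (\rank (U :&: kermx (b - 1%:M))) = odd (\rank U).
Proof.
move=> sUb; have sUE : (U *m E <= U)%MS.
  rewrite /E -scalemxAr scalemx_sub // mulmx_sumr summx_sub // => j _.
  elim: (nat_of_ord j) => [|k IHk]; first by rewrite expr0 mulmx1.
  by rewrite exprSr -mulmxE mulmxA (submx_trans _ sUb) ?submxMr.
set K := (U :&: kermx (b - 1%:M))%MS; set L := U *m (1%:M - E).
have LE : L *m E = 0.
  by rewrite /L -mulmxA mulmxBl mul1mx fixedE ?Eb // subrr mulmx0.
have sLU : (L <= U)%MS by rewrite /L mulmxBr mulmx1 addmx_sub // eqmx_opp.
have KL0 : (K :&: L)%MS = 0.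
  apply: fixed_sub_killed (capmxSr _ _) LE _.
  exact: submx_trans (capmxSl _ _) (capmxSr _ _).
have UKL : (U == K + L)%MS.
  rewrite addsmx_sub capmxSl sLU !andbT.
  rewrite -{1}[U]mulmx1 -(subrK E 1%:M) mulmxDr addrC addmx_sub_adds //.
  by rewrite sub_capmx sUE sub_kermx_fixed -mulmxA Eb eqxx.
have sLb : (L *m b <= L)%MS.
  rewrite /L -mulmxA mulmxBl mul1mx Eb -{1}bE -{1}(mulmx1 b) -mulmxBr mulmxA.
  exact: submxMr.
have LK0 : (L :&: kermx (b - 1%:M))%MS = 0.
  exact: fixed_sub_killed (capmxSl _ _) LE (capmxSr _ _).
rewrite (eqmxP UKL) (mxrank_disjoint_sum KL0) oddD.
by rewrite (negbTE (even_rank_stable_fixed_free sLb LK0)) addbF.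
Qed.

End OddOrder.

Lemma odd_rank_bigcap_fixed d p (T : eqType) (f : T -> 'M[F]_d) (r : seq T) :
  odd p -> {in r, forall t, f t ^+ p = 1} ->
  {in r &, forall t u, f t *m f u = f u *m f t} ->
  forall U : 'M[F]_d, {in r, forall t, (U *m f t <= U)%MS} ->
  odd (\rank (U :&: \bigcap_(t <- r) kermx (f t - 1%:M))%MS) = odd (\rank U).
Proof.
move=> p_odd; elim: r => [|x r IHr] fp fC U sU; first by rewrite big_nil capmx1.
have x_r : x \in x :: r by rewrite inE eqxx.
have r_sub t : t \in r -> t \in x :: r by rewrite inE => ->; rewrite orbT.
rewrite big_cons capmxA IHr => [||t u /r_sub tr /r_sub ur|t /r_sub tr].
- by rewrite (odd_rank_capmx_fixed p_odd (fp x x_r)) // sU.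
- by move=> t /r_sub; apply: fp.
- exact: fC.
rewrite sub_capmx (submx_trans _ (sU t tr)) ?submxMr ?capmxSl //= sub_kermx.
rewrite -mulmxA mulmxBr mulmx1 fC // -{2}(mul1mx (f t)) -mulmxBl mulmxA.
by move: (capmxSr U (kermx (f x - 1%:M))); rewrite sub_kermx => /eqP ->; rewrite mul0mx.
Qed.

End RealLinearAlgebra.

Section CommutingInvolutions.
Variables (F : fieldType) (d : nat) (I : finType) (M : I -> 'M[F]_d).
Hypotheses (two_neq0 : 2 != 0 :> F)
  (MC : forall i j, M i *m M j = M j *m M i) (MK : forall i, M i *m M i = 1%:M).

Definition weight_space (ch : {ffun I -> bool}) : 'M[F]_d :=
  (\bigcap_i kermx (M i - ((-1) ^+ ch i)%:M))%MS.

Lemma sub_weight_spaceP m (X : 'M_(m, d)) (ch : {ffun I -> bool}) :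
  reflect (forall i, X *m M i = (-1) ^+ ch i *: X) (X <= weight_space ch)%MS.
Proof.
apply: (iffP sub_bigcapmxP) => [sXW i | XM i _].
  by move: (sXW i isT); rewrite sub_kermx mulmxBr mul_mx_scalar subr_eq0 => /eqP.
by rewrite sub_kermx mulmxBr mul_mx_scalar XM subrr.
Qed.

Lemma weight_space_mul m (X : 'M_(m, d)) (ch : {ffun I -> bool})
    (Q : 'M[F]_d) (f : I -> I) :
  (forall i, Q *m M i = M (f i) *m Q) -> (X <= weight_space ch)%MS ->
  (X *m Q <= weight_space [ffun i => ch (f i)])%MS.
Proof.
move=> QM /sub_weight_spaceP XM; apply/sub_weight_spaceP => i.
by rewrite ffunE -mulmxA QM mulmxA XM scalemxAl.
Qed.

Definition sign_proj i (c : bool) : 'M[F]_d := 2^-1 *: (1%:M + (-1) ^+ c *: M i).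

Definition weight_proj (ch : {ffun I -> bool}) : 'M[F]_d :=
  \prod_i sign_proj i (ch i).

Let half_double m (X : 'M[F]_(m, d)) : 2^-1 *: (X + X) = X.
Proof. by rewrite -mulr2n -scaler_nat scalerA mulVf ?scale1r. Qed.

Lemma mul_sign_proj m (X : 'M_(m, d)) i (c s : bool) :
  X *m M i = (-1) ^+ s *: X -> X *m sign_proj i c = if c == s then X else 0.
Proof.
move=> XM; rewrite -scalemxAr mulmxDr mulmx1 -scalemxAr XM scalerA -signr_addb.
by case: c; case: s {XM};
  rewrite /= ?expr0 ?expr1 ?scale1r ?scaleN1r ?subrr ?scaler0 ?half_double.
Qed.

Lemma mul_weight_proj m (X : 'M_(m, d)) (s : I -> bool) ch :
  (forall i, X *m M i = (-1) ^+ s i *: X) ->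
  X *m weight_proj ch = if [forall i, ch i == s i] then X else 0.
Proof.
move=> XM; rewrite /weight_proj -big_filter; set r := filter _ _.
have -> : [forall i, ch i == s i] = all (fun i => ch i == s i) r.
  apply/forallP/allP => [chs i _ | chs i]; first exact: chs.
  by apply: chs; rewrite mem_filter mem_index_enum.
elim: r => [|i r IHr]; first by rewrite big_nil mulmx1.
rewrite big_cons -mulmxE mulmxA (mul_sign_proj _ (XM i)) /=.
by case: (ch i == s i); rewrite ?mul0mx.
Qed.

Lemma weight_projK m (X : 'M_(m, d)) (ch : {ffun I -> bool}) :
  (X <= weight_space ch)%MS -> X *m weight_proj ch = X.
Proof.
move/sub_weight_spaceP/mul_weight_proj->.
by have -> : [forall i, ch i == ch i] by apply/forallP => i.
Qed.

Lemma weight_proj_eq0 m (X : 'M_(m, d)) (ch ch' : {ffun I -> bool}) :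
  (X <= weight_space ch')%MS -> ch' != ch -> X *m weight_proj ch = 0.
Proof.
move/sub_weight_spaceP/mul_weight_proj->; case: forallP => // chE.
by case/eqP; apply/ffunP => i; rewrite (eqP (chE i)).
Qed.

Lemma weight_space_eq m (X : 'M_(m, d)) (ch ch' : {ffun I -> bool}) : X != 0 ->
  (X <= weight_space ch)%MS -> (X <= weight_space ch')%MS -> ch = ch'.
Proof.
move=> nzX Xch Xch'; apply/eqP; apply: contraNT nzX => neq.
by rewrite -(weight_projK Xch) (weight_proj_eq0 Xch') 1?eq_sym ?eqxx.
Qed.

Let sign_projC i j c : M i *m sign_proj j c = sign_proj j c *m M i.
Proof.
rewrite -scalemxAr -scalemxAl mulmxDr mulmxDl mulmx1 mul1mx.
by rewrite -scalemxAr -scalemxAl MC.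
Qed.

Let sign_projM i c : M i *m sign_proj i c = (-1) ^+ c *: sign_proj i c.
Proof.
rewrite -scalemxAr mulmxDr mulmx1 -scalemxAr MK scalerA mulrC -scalerA.
congr (_ *: _); rewrite scalerDr scalerA -signr_addb addbb expr0 scale1r.
by rewrite addrC scalemx1.
Qed.

Let sign_proj_seqM i (r : seq I) (ch : {ffun I -> bool}) : i \in r ->
  M i *m \prod_(j <- r) sign_proj j (ch j)
    = (-1) ^+ ch i *: \prod_(j <- r) sign_proj j (ch j).
Proof.
elim: r => [|j r IHr] //; rewrite inE big_cons -mulmxE mulmxA.
case: (eqVneq i j) => [<- _ | neq_ij /= ir]; first by rewrite sign_projM scalemxAl.
by rewrite sign_projC -mulmxA IHr // scalemxAr.
Qed.

Lemma weight_proj_sub ch : (weight_proj ch <= weight_space ch)%MS.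
Proof.
apply/sub_weight_spaceP => i; rewrite mulmxE.
have <- : GRing.comm (M i) (weight_proj ch).
  by apply: commr_prod => j _; rewrite /GRing.comm -!mulmxE sign_projC.
by rewrite -mulmxE sign_proj_seqM ?mem_index_enum.
Qed.

Lemma sum_weight_proj : \sum_ch weight_proj ch = 1%:M.
Proof.
rewrite /weight_proj -(bigA_distr_bigA sign_proj) /= big1 // => i _.
rewrite big_bool /= -scalerDr addrACA expr0 expr1 scale1r scaleN1r.
by rewrite addNr addr0 half_double.
Qed.

Lemma weight_spaces_direct : mxdirect (\sum_ch weight_space ch).
Proof.
apply/mxdirect_sumsP => ch _; set X := (weight_space ch :&: _)%MS.
have /sub_sumsmxP [u uX] : (X <= \sum_(ch' | ch' != ch) weight_space ch')%MS.
  exact: capmxSr.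
rewrite -(weight_projK (capmxSl _ _ : (X <= _)%MS)) uX mulmx_suml.
rewrite big1 // => ch' neq.
by rewrite -mulmxA (weight_proj_eq0 (submx_refl _) neq) mulmx0.
Qed.

Lemma sum_rank_weight_spaces : (\sum_ch \rank (weight_space ch))%N = d.
Proof.
move/mxdirectP: weight_spaces_direct => /= <-; apply/eqP.
rewrite eqn_leq rank_leq_col -{1}(mxrank1 F d) mxrankS // -sum_weight_proj.
by apply: summx_sub_sums => ch _; apply: weight_proj_sub.
Qed.

Lemma odd_rank_weight_space : odd d -> exists ch, odd (\rank (weight_space ch)).
Proof.
move=> odd_d; apply/existsP; apply: contraLR odd_d => /existsPn even_ch.
rewrite -sum_rank_weight_spaces; elim/big_ind: _ => // x y.
by move=> /negbTE oddx /negbTE oddy; rewrite oddD oddx oddy.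
Qed.

End CommutingInvolutions.

Lemma conjmx_expr (F : fieldType) n (V f : 'M[F]_n) k : V \in unitmx ->
  conjmx V (f ^+ k) = conjmx V f ^+ k.
Proof.
move=> uV; elim: k => [|k IHk]; first by rewrite !expr0 conjmx_scalar ?row_free_unit.
by rewrite !exprS -!mulmxE conjmxM ?inE ?stablemx_unit // IHk.
Qed.

Section Representation.
Variables (gT : finGroupType) (G : {group gT}) (d : nat).
Variable rG : mx_representation R G d.

Lemma repr_mx_expg x k : x \in G -> rG (x ^+ k)%g = rG x ^+ k.
Proof.
move=> Gx; elim: k => [|k IHk]; first by rewrite expg0 repr_mx1 expr0.
by rewrite expgS repr_mxM ?groupX // IHk exprS mulmxE.
Qed.

Lemma repr_mxJ x y : x \in G -> y \in G ->
  rG (x ^ y)%g = invmx (rG y) *m rG x *m rG y.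
Proof.
by move=> Gx Gy; rewrite conjgE !repr_mxM ?groupV ?groupM // repr_mxV // mulmxA.
Qed.

Lemma repr_mx_mulJ x y : x \in G -> y \in G ->
  rG y *m rG x = rG (x ^ y^-1)%g *m rG y.
Proof.
move=> Gx Gy; rewrite repr_mxJ ?groupV // repr_mxV // invmxK.
by rewrite -[RHS]mulmxA mulVmx ?repr_mx_unit // mulmx1.
Qed.

Lemma repr_mx_commute x y : x \in G -> y \in G -> [~ x, y]%g \in rker rG ->
  rG x *m rG y = rG y *m rG x.
Proof.
move=> Gx Gy /rkerP[Gxy rGxy].
by rewrite -!repr_mxM // (commgC x y) (repr_mxM _ (groupM Gy Gx) Gxy) rGxy mulmx1.
Qed.

Lemma nontrivial_derived_layer : solvable G -> nontrivial_repr rG ->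
  exists k, ~~ ((G^`(k))%g \subset rker rG) /\ (G^`(k.+1))%g \subset rker rG.
Proof.
move=> /derivedP[n Gn1] [g Gg rGg].
have ex_ker : exists k, (G^`(k))%g \subset rker rG by exists n; rewrite Gn1 sub1G.
case: (ex_minnP ex_ker) => -[|k] Gk_ker min_k.
  by case/negP: rGg; move/subsetP/(_ g Gg)/rkerP: Gk_ker => [_ ->].
by exists k; split=> //; apply: contraTN (leqnn k) => /min_k; rewrite ltnNge.
Qed.

Lemma exists_prime_order_image a : a \in G -> rG a != 1%:M ->
  exists p b, [/\ prime p, b \in <[a]>%g, rG b ^+ p = 1%:M & rG b != 1%:M].
Proof.
move=> Ga nt_a; pose Q j := (0 < j)%N && (rG a ^+ j == 1%:M).
have ex_Q : exists j, Q j.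
  by exists #[a]%g; rewrite /Q order_gt0 -repr_mx_expg // expg_order repr_mx1 eqxx.
case: (ex_minnP ex_Q) => m /andP[m_gt0 /eqP am] min_m.
have m_gt1 : (1 < m)%N.
  rewrite ltn_neqAle eq_sym m_gt0 andbT; apply: contra nt_a => /eqP m1.
  by rewrite -am m1 expr1 eqxx.
have p_pr := pdiv_prime m_gt1; have p_dvd := pdiv_dvd m.
exists (pdiv m), (a ^+ (m %/ pdiv m))%g; split; first exact: p_pr.
- exact: mem_cycle.
- by rewrite repr_mx_expg // -exprM divnK // am.
apply: contraTneq (ltn_Pdiv (prime_gt1 p_pr) m_gt0) => am_p; rewrite -leqNgt.
apply: min_m; apply/andP; split.
  by rewrite divn_gt0 ?prime_gt0 // dvdn_leq.
by rewrite -repr_mx_expg // am_p eqxx.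
Qed.

End Representation.

Section Normalizing.
Variables (gT : finGroupType) (G : {group gT}) (d : nat).
Variables (rG : mx_representation R G d) (N : 'M[R]_d).
Hypothesis nN : normalizing_finite_order rG N.

Lemma normalizing_unit : N \in unitmx.
Proof. by case: nN. Qed.

Lemma normalizing_mul h : h \in G ->
  exists2 h', h' \in G & N *m rG h = rG h' *m N.
Proof.
case: nN => uN _ nNG _ Gh; have [h' Gh' NhN] := nNG h Gh.
by exists h' => //; rewrite -NhN mulmxKV.
Qed.

Lemma normalizing_expr_mul j h : h \in G ->
  exists2 h', h' \in G & N ^+ j *m rG h = rG h' *m N ^+ j.
Proof.
elim: j h => [|j IHj] h Gh; first by exists h; rewrite // expr0 mul1mx mulmx1.
have [h1 Gh1 Nh1] := normalizing_mul Gh; have [h2 Gh2 Nh2] := IHj h1 Gh1.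
exists h2 => //; rewrite exprSr -mulmxE -mulmxA Nh1 mulmxA Nh2 -mulmxA.
by rewrite mulmxE -exprSr.
Qed.

Lemma normalizing_mul_expr h j : h \in G ->
  exists2 h', h' \in G & (N *m rG h) ^+ j = rG h' *m N ^+ j.
Proof.
move=> Gh; elim: j => [|j [h1 Gh1 Nh1]].
  by exists 1%g; rewrite ?group1 // expr0 repr_mx1 mul1mx.
have [h2 Gh2 Nh2] := normalizing_expr_mul j.+1 Gh.
exists (h1 * h2)%g; first by rewrite groupM.
rewrite exprSr Nh1 repr_mxM // -mulmxA -Nh2 exprSr -!mulmxE.
by rewrite !mulmxA.
Qed.

Lemma normalizing_mul_finite_order h : h \in G ->
  exists2 k, (0 < k)%N & (N *m rG h) ^+ k = 1.
Proof.
move=> Gh; case: nN => _ [k k_gt0 Nk] _ _.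
have [h' Gh' Nh'] := normalizing_mul_expr k Gh.
exists (k * #[h']%g)%N; first by rewrite muln_gt0 k_gt0 order_gt0.
by rewrite exprM Nh' Nk mulmx1 -repr_mx_expg // expg_order repr_mx1.
Qed.

Definition conj_stable (K : {set gT}) :=
  forall a, a \in K -> exists2 b, b \in K & conjmx N (rG a) = rG b.

Let conjNM X Y : conjmx N (X *m Y) = conjmx N X *m conjmx N Y.
Proof. by rewrite conjmxM ?inE ?stablemx_unit ?normalizing_unit. Qed.

Let conjN1 : conjmx N 1%:M = 1%:M.
Proof. by rewrite conjmx_scalar ?row_free_unit ?normalizing_unit. Qed.

Let conjN_reprV a b : a \in G -> b \in G ->
  conjmx N (rG a) = rG b -> conjmx N (rG a^-1%g) = rG b^-1%g.
Proof.
move=> Ga Gb ab; rewrite -[conjmx N _]mulmx1 -(repr_mx1 rG) -(mulgV b).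
rewrite repr_mxM ?groupV // mulmxA -ab -conjNM -repr_mxM ?groupV //.
by rewrite mulVg repr_mx1 conjN1 mul1mx.
Qed.

Lemma conj_stable_der1 (K : {group gT}) : K \subset G -> conj_stable K ->
  conj_stable (K^`(1))%g.
Proof.
move=> sKG stK; have sK'G : (K^`(1) \subset G)%g := subset_trans (der_sub 1 K) sKG.
move=> a; rewrite derg1 => /gen_prodgP [n [c Kc ->]].
elim: n c Kc => [|n IHn] c Kc; first by exists 1%g; rewrite ?group1 // big_ord0 repr_mx1.
rewrite big_ord_recr /=; set q := (\prod_(i < n) _)%g.
have [b Kb qb] := IHn (fun i => c (widen_ord (leqnSn n) i)) (fun i => Kc _).
case/imset2P: (Kc ord_max) => x y Kx Ky cxy.
have [[x' Kx' xx'] [y' Ky' yy']] := (stK x Kx, stK y Ky).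
have Gb : b \in G by apply: (subsetP sK'G); rewrite derg1.
have Gq : q \in G.
  by apply: (subsetP sK'G); rewrite derg1 group_prod // => i _; rewrite mem_gen.
have [Gx Gy] := (subsetP sKG x Kx, subsetP sKG y Ky).
have [Gx' Gy'] := (subsetP sKG x' Kx', subsetP sKG y' Ky').
exists (b * [~ x', y'])%g; first by rewrite groupM // mem_commg.
rewrite cxy (repr_mxM _ Gq (groupR Gx Gy)) (repr_mxM _ Gb (groupR Gx' Gy')).
rewrite conjNM qb; congr (_ *m _).
have GxV := groupVr Gx; have GyV := groupVr Gy.
have GxV' := groupVr Gx'; have GyV' := groupVr Gy'.
rewrite !commgEl !conjgE !repr_mxM ?groupM // !conjNM.
by rewrite (conjN_reprV Gx Gx' xx') (conjN_reprV Gy Gy' yy') xx' yy'.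
Qed.

Lemma conj_stable_derived k : conj_stable (G^`(k))%g.
Proof.
elim: k => [|k IHk].
  move=> a Ga; have [b Gb NaN] := normalizing_mul Ga.
  by exists b; rewrite // conjumx ?normalizing_unit // NaN mulmxK ?normalizing_unit.
by rewrite dergSn -derg1; apply: conj_stable_der1 => //; apply: der_sub.
Qed.

End Normalizing.

Section IrreducibleOddDegree.
Variables (gT : finGroupType) (G : {group gT}) (d : nat).
Variable rG : mx_representation R G d.
Hypotheses (irrG : mx_irreducible rG) (odd_d : odd d).

Let submodule_full (U : 'M[R]_d) : mxmodule rG U -> U != 0 -> (1%:M <= U)%MS.
Proof. by case/mx_irrP: irrG => _ irrU mU nzU; rewrite sub1mx irrU. Qed.

Lemma odd_exponent_layer_trivial (A : {set gT}) p :
  odd p -> A \subset G -> {in G, forall h, {in A, forall a, (a ^ h)%g \in A}} ->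
  {in A &, forall a b, rG a *m rG b = rG b *m rG a} ->
  {in A, forall a, rG a ^+ p = 1%:M} -> {in A, forall a, rG a = 1%:M}.
Proof.
move=> p_odd sAG AJ AC Ap a Aa.
set Fix := (\bigcap_(b in A) kermx (rG b - 1%:M))%MS.
have oddFix : odd (\rank Fix).
  have fp : {in enum A, forall b, rG b ^+ p = 1}.
    by move=> b; rewrite mem_enum; apply: Ap.
  have fC : {in enum A &, forall b c, rG b *m rG c = rG c *m rG b}.
    by move=> b c; rewrite !mem_enum; apply: AC.
  have := odd_rank_bigcap_fixed p_odd fp fC (fun b _ => submx1 (1%:M *m rG b)).
  by rewrite cap1mx mxrank1 odd_d big_enum.
have mFix : mxmodule rG Fix.
  apply/mxmoduleP => h Gh; apply/sub_bigcapmxP => b Ab.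
  have Gb := subsetP sAG b Ab; have AbJ := AJ _ (groupVr Gh) b Ab.
  rewrite sub_kermx -mulmxA mulmxBr mulmx1 repr_mx_mulJ //.
  rewrite -{2}(mul1mx (rG h)) -mulmxBl mulmxA.
  have /eqP-> : (Fix *m (rG (b ^ h^-1)%g - 1%:M) == 0).
    by rewrite -sub_kermx (bigcapmx_inf (b ^ h^-1)%g).
  by rewrite mul0mx.
have : (1%:M <= Fix)%MS.
  by apply: submodule_full mFix _; apply: contraTneq oddFix => ->; rewrite mxrank0.
by move=> /sub_bigcapmxP/(_ a Aa); rewrite sub_kermx mul1mx subr_eq0 => /eqP.
Qed.

Section InvolutionFamily.
Variables (N : 'M[R]_d) (I : finType) (M : I -> 'M[R]_d).
Hypotheses (nN : normalizing_finite_order rG N)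
  (MC : forall i j, M i *m M j = M j *m M i) (MK : forall i, M i *m M i = 1%:M)
  (M_repr : forall i, exists2 a, a \in G & M i = rG a)
  (M_G : forall h, h \in G ->
     exists f : I -> I, forall i, rG h *m M i = M (f i) *m rG h)
  (M_N : exists f : I -> I, forall i, N *m M i = M (f i) *m N)
  (M_nt : exists i, M i != 1%:M).

Let two_neq0 : 2 != 0 :> R. Proof. by rewrite pnatr_eq0. Qed.
Let W := weight_space M.

Lemma weight_space_nontrivial ch : W ch != 0 -> exists i, ch i.
Proof.
move=> nzW; case: (boolP [exists i, ch i]) => [/existsP//|/existsPn ch0].
have mW : mxmodule rG (W ch).
  apply/mxmoduleP => h Gh; have [f Mf] := M_G Gh.
  have chf : [ffun i => ch (f i)] = ch.
    by apply/ffunP => i; rewrite ffunE (negbTE (ch0 _)) (negbTE (ch0 _)).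
  by have := weight_space_mul Mf (submx_refl (W ch)); rewrite chf.
have /sub_weight_spaceP W1 := submodule_full mW nzW.
case: M_nt => i; rewrite -[M i]mul1mx W1 (negbTE (ch0 i)) expr0 scale1r.
by rewrite eqxx.
Qed.

Lemma weight_space_orbit ch ch' : W ch != 0 -> W ch' != 0 ->
  exists2 g, g \in G & (W ch *m rG g <= W ch')%MS.
Proof.
move=> nzW nzW'; set Y := (\sum_(g in G) W ch *m rG g)%MS.
have mY : mxmodule rG Y.
  apply/mxmoduleP => h Gh; rewrite sumsmxMr; apply/sumsmx_subP => g Gg.
  by rewrite -mulmxA -repr_mxM // (sumsmx_sup (g * h)%g) ?groupM.
have nzY : Y != 0.
  apply: contraNneq nzW => Y0; rewrite -submx0 -Y0.
  by rewrite (sumsmx_sup 1%g) ?repr_mx1 ?mulmx1.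
have /sub_sumsmxP [u W'u] : (W ch' <= Y)%MS.
  exact: submx_trans (submx1 _) (submodule_full mY nzY).
have [g Gg nz_g] : exists2 g, g \in G & W ch *m rG g *m weight_proj M ch' != 0.
  apply/exists_inP; apply: contraNT nzW' => /exists_inPn zero.
  rewrite -(weight_projK two_neq0 (submx_refl (W ch'))) W'u mulmx_suml.
  rewrite big1 ?eqxx // => g Gg.
  by rewrite -mulmxA (eqP (negbNE (zero g Gg))) mulmx0.
have [f Mf] := M_G Gg; have Wg := weight_space_mul Mf (submx_refl (W ch)).
exists g => //; suff <- : [ffun i => ch (f i)] = ch' by [].
apply/eqP; apply: contraNT nz_g => neq.
by rewrite (weight_proj_eq0 two_neq0 Wg neq) eqxx.
Qed.

Lemma weight_space_stable ch : W ch != 0 ->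
  exists2 h, h \in G & (W ch *m (N *m rG h) <= W ch)%MS.
Proof.
move=> nzW; have [fN MfN] := M_N; set psi := [ffun i => ch (fN i)].
have WN : (W ch *m N <= W psi)%MS := weight_space_mul MfN (submx_refl _).
have nzWN : W ch *m N != 0.
  apply: contraNneq nzW => WN0.
  by rewrite -(mulmxK (normalizing_unit nN) (W ch)) WN0 mul0mx.
have nzWpsi : W psi != 0.
  by apply: contraNneq nzWN => W0; rewrite -submx0 -W0.
have [g Gg Wg] := weight_space_orbit nzW nzWpsi.
have Gh := groupVr Gg; have [fh Mfh] := M_G Gh.
have Wh : (W psi *m rG g^-1%g <= W [ffun i => psi (fh i)])%MS.
  exact: weight_space_mul Mfh (submx_refl _).
have W_sub : (W ch <= W psi *m rG g^-1%g)%MS.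
  by rewrite -{1}[W ch](repr_mxK rG Gg) submxMr.
have chE := weight_space_eq two_neq0 nzW (submx_refl _) (submx_trans W_sub Wh).
exists g^-1%g => //; rewrite mulmxA {2}chE.
exact: submx_trans (submxMr _ WN) Wh.
Qed.

Lemma E1_triple_of_involutions : E1_triple rG N.
Proof.
have [ch odd_ch] := odd_rank_weight_space two_neq0 MC MK odd_d.
have {}odd_ch : odd (\rank (W ch)) := odd_ch.
have nzW : W ch != 0 by apply: contraTneq odd_ch => ->; rewrite mxrank0.
have [i0 ch_i0] := weight_space_nontrivial nzW.
have [h Gh sWx] := weight_space_stable nzW.
have [v /andP[nz_v vW] [l vx]] := stable_odd_rank_eigenvector sWx odd_ch.
have [k k_gt0 xk] := normalizing_mul_finite_order nN Gh.
have [h' Gh' NhN] := normalizing_mul nN Gh.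
(* The eigenvalue of [N rG h] on [v] is [1] or [-1]; in the second case correct
   it by an element acting on the weight space [W ch] by [-1]. *)
have [l1|lN1] := eigenvalue_finite_order k_gt0 xk nz_v vx.
  by exists h' => //; apply/eigenvalueP; exists v; rewrite // -NhN vx l1.
have [a Ga Ma] := M_repr i0.
exists (a * h')%g; first by rewrite groupM.
apply/eigenvalueP; exists v => //; rewrite repr_mxM // -mulmxA -NhN mulmxA -Ma.
move/sub_weight_spaceP: vW => ->; rewrite ch_i0 expr1 scaleN1r mulNmx vx lN1.
by rewrite scaleN1r opprK scale1r.
Qed.

End InvolutionFamily.

Lemma E1_triple_involution_layer (A : {set gT}) (N : 'M[R]_d) :
  normalizing_finite_order rG N -> A \subset G ->
  {in G, forall h, {in A, forall a, (a ^ h)%g \in A}} ->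
  {in A, forall a, exists2 b, b \in A & N *m rG a = rG b *m N} ->
  {in A &, forall a b, rG a *m rG b = rG b *m rG a} ->
  {in A, forall a, rG a ^+ 2 = 1%:M} -> (exists2 a, a \in A & rG a != 1%:M) ->
  E1_triple rG N.
Proof.
move=> nN sAG AJ AN AC A2 [a0 Aa0 nt_a0].
pose I := {a | a \in A}; pose M (i : I) := rG (val i).
apply: (@E1_triple_of_involutions N I M nN) => [i j|i|i|h Gh||].
- exact: AC (valP i) (valP j).
- by rewrite /M mulmxE -expr2 A2 ?(valP i).
- by exists (val i); first exact: subsetP sAG _ (valP i).
- have MJ (i : I) : exists j : I, rG h *m M i = M j *m rG h.
    exists (exist (fun a => a \in A) _ (AJ _ (groupVr Gh) _ (valP i))).
    by rewrite /M repr_mx_mulJ ?(subsetP sAG _ (valP i)).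
  by have [f Mf] := fin_all_exists MJ; exists f.
- have MN (i : I) : exists j : I, N *m M i = M j *m N.
    by have [b Ab NbN] := AN _ (valP i); exists (exist _ b Ab).
  by have [f Mf] := fin_all_exists MN; exists f.
by exists (exist _ a0 Aa0).
Qed.

End IrreducibleOddDegree.

Section ExponentLayer.
Variables (gT : finGroupType) (G : {group gT}) (d : nat).
Variables (rG : mx_representation R G d) (k p : nat).

Definition exponent_layer := [set a in (G^`(k))%g | rG a ^+ p == 1%:M].

Lemma exponent_layer_sub : exponent_layer \subset G.
Proof.
by apply/subsetP => a; rewrite inE => /andP[/(subsetP (der_sub k G))].
Qed.

Lemma exponent_layer_expr : {in exponent_layer, forall a, rG a ^+ p = 1%:M}.
Proof. by move=> a; rewrite inE => /andP[_ /eqP]. Qed.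

Lemma exponent_layerJ :
  {in G, forall h, {in exponent_layer, forall a, (a ^ h)%g \in exponent_layer}}.
Proof.
move=> h Gh a Aa; have Ga := subsetP exponent_layer_sub a Aa.
move: Aa; rewrite !inE => /andP[Gka /eqP ap].
rewrite memJ_norm ?(subsetP (normal_norm (der_normal k G))) //= Gka.
rewrite -repr_mx_expg ?groupJ // -conjXg repr_mxJ ?groupX // repr_mx_expg //.
by rewrite ap mulmx1 mulVmx ?repr_mx_unit ?eqxx.
Qed.

Lemma exponent_layer_commute : (G^`(k.+1))%g \subset rker rG ->
  {in exponent_layer &, forall a b, rG a *m rG b = rG b *m rG a}.
Proof.
move=> Gk'_ker a b Aa Ab; have sAG := subsetP exponent_layer_sub.
apply: repr_mx_commute; rewrite ?sAG //; apply: (subsetP Gk'_ker).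
move: Aa Ab; rewrite !inE dergSn => /andP[Gka _] /andP[Gkb _].
by rewrite mem_commg.
Qed.

Lemma exponent_layer_normalizing N : normalizing_finite_order rG N ->
  {in exponent_layer, forall a,
    exists2 b, b \in exponent_layer & N *m rG a = rG b *m N}.
Proof.
move=> nN a; rewrite inE => /andP[Gka /eqP ap].
have [b Gkb NaN] := conj_stable_derived nN Gka; have uN := normalizing_unit nN.
exists b; last by rewrite -NaN conjumx // mulmxKV.
by rewrite inE Gkb -NaN -conjmx_expr // ap conjmx_scalar ?row_free_unit ?eqxx.
Qed.

End ExponentLayer.

Theorem corollary3 (gT : finGroupType) (G : {group gT}) :
  solvable G -> E1_group G.
Proof.
move=> solG d rG irrG ntG odd_d N nN.
have [k [ntGk Gk'_ker]] := nontrivial_derived_layer solG ntG.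
have [a Gka nt_a] : exists2 a, a \in (G^`(k))%g & rG a != 1%:M.
  have [a Gka not_ker] := subsetPn ntGk; exists a => //.
  apply: contra not_ker => /eqP rGa.
  by apply/rkerP; rewrite (subsetP (der_sub k G)).
have Ga := subsetP (der_sub k G) a Gka.
have [p [b [p_pr b_a bp nt_b]]] := exists_prime_order_image Ga nt_a.
set A := exponent_layer rG k p.
have Ab : b \in A.
  by rewrite inE bp eqxx andbT (subsetP _ b b_a) // cycle_subG.
have sAG : A \subset G := exponent_layer_sub rG k p.
have AJ := @exponent_layerJ _ _ _ rG k p.
have Ap := @exponent_layer_expr _ _ _ rG k p.
have AC := exponent_layer_commute Gk'_ker (p := p).
have [p2|p_odd] := even_prime p_pr.
  apply: (E1_triple_involution_layer irrG odd_d nN sAG AJ _ AC) => //.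
  - exact: exponent_layer_normalizing.
  - by move=> x Ax; have := Ap x Ax; rewrite p2.
  by exists b.
have rGb := odd_exponent_layer_trivial irrG odd_d p_odd sAG AJ AC Ap Ab.
by rewrite rGb eqxx in nt_b.
Qed.
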